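(* Let $\varphi:\Lambda\to\Gamma$ be a regular covering map of finite simplicial graphs, and let $u,u'$ be vertices of $\Lambda$ with $\mathrm{lk}(u)\subseteq\mathrm{st}(u')$ and $\varphi(u)=\varphi(u')$. If $u$ is not an isolated vertex, then $u=u'$. Otherwise, $u'$ is also an isolated vertex.
   Context: Graphs are finite simplicial graphs; $\mathrm{lk}(u)$ is the subgraph induced by the neighbours of $u$ and $\mathrm{st}(u)$ the subgraph induced by $\mathrm{lk}(u)\cup\{u\}$. A covering map $\varphi:\Lambda\to\Gamma$ is a surjective simplicial map mapping the neighbours of each vertex $u$ bijectively onto the neighbours of $\varphi(u)$; regular means the group of graph automorphisms $\mu$ of $\Lambda$ with $\varphi\mu=\varphi$ acts transitively on each fiber. *)

From mathcomp Require Import all_boot all_fingroup.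
Set Implicit Arguments. Unset Strict Implicit. Unset Printing Implicit Defensive.

Definition simple_graph (T : finType) (e : rel T) : Prop :=
  symmetric e /\ irreflexive e.

(* Neighbours of u, i.e. the vertex set of lk(u). *)
Definition nbhd (T : finType) (e : rel T) (u : T) : {set T} := [set v | e u v].

Definition star (T : finType) (e : rel T) (u : T) : {set T} := u |: nbhd e u.

Definition isolated (T : finType) (e : rel T) (u : T) : Prop :=
  nbhd e u = set0.

Definition covering_map (TL TG : finType) (eL : rel TL) (eG : rel TG)
  (phi : TL -> TG) : Prop :=
  [/\ forall y : TG, exists x : TL, phi x = y,
      forall a b, eL a b -> eG (phi a) (phi b),
      forall u, {in nbhd eL u &, injective phi}
    & forall u, phi @: nbhd eL u = nbhd eG (phi u)].

Definition deck (TL TG : finType) (eL : rel TL) (phi : TL -> TG)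
  (mu : {perm TL}) : Prop :=
  (forall a b, eL (mu a) (mu b) = eL a b) /\ (forall a, phi (mu a) = phi a).

Definition regular_covering (TL TG : finType) (eL : rel TL) (eG : rel TG)
  (phi : TL -> TG) : Prop :=
  covering_map eL eG phi /\
  forall x y, phi x = phi y -> exists mu : {perm TL}, deck eL phi mu /\ mu x = y.

From mathcomp Require Import all_boot all_fingroup.

Set Implicit Arguments.
Unset Strict Implicit.

(* A neighbour v of u lies in st(u'), and it cannot be u' itself, since
   adjacent vertices of Lambda have distinct images in the loopless graph
   Gamma.  So u and u' are both neighbours of v with the same image, and
   local injectivity of phi at v forces u = u'.  An isolated vertex is one
   whose image is isolated, so isolation passes between vertices of a fiber. *)

Section CoveringMap.

Variables (TL TG : finType) (eL : rel TL) (eG : rel TG) (phi : TL -> TG).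
Hypothesis cover : covering_map eL eG phi.

Lemma cover_isolatedE (u : TL) : isolated eL u <-> isolated eG (phi u).
Proof.
case: cover => _ _ _ img; rewrite /isolated -img.
split=> [-> | /eqP]; first exact: imset0.
by rewrite imset_eq0 => /eqP.
Qed.

Lemma cover_isolated_fiber (u u' : TL) :
  phi u = phi u' -> isolated eL u -> isolated eL u'.
Proof. by move=> eq_phi /cover_isolatedE; rewrite eq_phi => /cover_isolatedE. Qed.

Lemma cover_adj_neq (u v : TL) :
  irreflexive eG -> eL u v -> phi u != phi v.
Proof.
case: cover => _ hom _ _ irrG /hom; apply: contraTneq => ->.
by rewrite irrG.
Qed.

Lemma cover_common_nbr_inj (v u u' : TL) :
  symmetric eL -> eL u v -> eL u' v -> phi u = phi u' -> u = u'.
Proof.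
case: cover => _ _ inj _ symL uv u'v; apply: (inj v); by rewrite inE symL.
Qed.

End CoveringMap.

Theorem lemma3p2 (TL TG : finType) (eL : rel TL) (eG : rel TG)
  (phi : TL -> TG) (u u' : TL) :
  simple_graph eL -> simple_graph eG ->
  regular_covering eL eG phi ->
  nbhd eL u \subset star eL u' ->
  phi u = phi u' ->
  (~ isolated eL u -> u = u') /\ (isolated eL u -> isolated eL u').
Proof.
move=> [symL _] [_ irrG] [cover _] lk_sub_st eq_phi.
split; last exact: (cover_isolated_fiber cover eq_phi).
move=> non_iso; have [v v_nbr] : exists v, v \in nbhd eL u.
  by apply/set0Pn/eqP.
have uv : eL u v by rewrite inE in v_nbr.
move: (subsetP lk_sub_st v v_nbr); rewrite !inE => /orP[/eqP v_u' | u'v].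
- by move: (cover_adj_neq cover irrG uv); rewrite v_u' eq_phi eqxx.
- exact: (cover_common_nbr_inj cover symL uv _ eq_phi).
Qed.
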